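(* Let $F:\mathcal A\to\mathcal B$ be a modal functor between modal categories, and suppose the semantic functor $(-)^+_{\mathcal B}$ is injective on objects. Then $F$ preserves arbitrary meets fibre-wise (i.e. for every set $X$ the restriction $F_X:\mathcal A_X\to\mathcal B_X$ preserves all meets, including the empty meet) if and only if $F$ preserves the interpretation of $\mathcal L^D_{\Sigma_l}$ for every nonempty set $\Sigma$. Dually, $F$ preserves arbitrary joins fibre-wise iff $F$ preserves the interpretation of $\mathcal L^D_{\Sigma_r}$ for every nonempty set $\Sigma$. Here preserving the interpretation means: for every set $X$, every tuple $(A_a)_{a\in\Sigma}$ in $\mathcal A_X$, every $V:\mathsf P\to\wp(X)$ and every formula $\varphi$, $[\![\varphi]\!]^V_{(A_a)_a}=[\![\varphi]\!]^V_{(FA_a)_a}$.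
   Context: A modal category is a topological category $\mathcal A$ over $\mathbf{Set}$ (faithful forgetful functor; every structured source has exactly one initial lift; each fibre $\mathcal A_X$ of objects over $X$, ordered by $A\le A'$ iff $\mathrm{id}_X$ is a morphism $A\to A'$, is a complete lattice) with a concrete functor $(-)^+:\mathcal A\to\mathbf{CABAO}$; $\mathbf{CABAO}$ has objects $(X,m)$ with $m:\wp(X)\to\wp(X)$ arbitrary and morphisms $f:(X,m)\to(Y,n)$ the functions with $f^{-1}(n(T))\subseteq m(f^{-1}(T))$ for all $T$; $A^+$ is the operator of $A$. A modal functor is a concrete functor $F$ (commuting with the forgetful functors) with $(FA)^+_{\mathcal B}=A^+_{\mathcal A}$ for all $A$. Fix a nonempty set $\mathsf P$ of propositional variables. $\mathcal L^D_{\Sigma_l}$ and $\mathcal L^D_{\Sigma_r}$ have formulas $p\mid\varphi\wedge\psi\mid\neg\varphi\mid\Box_G\varphi\mid K_GH$ for $p\in\mathsf P$, $G,H\subseteq\Sigma$. On a tuple $(A_a)_{a\in\Sigma}$ in $\mathcal A_X$ and $V:\mathsf P\to\wp(X)$: let $A_G=\bigwedge_{a\in G}A_a$ (meet in $\mathcal A_X$) for $\mathcal L^D_{\Sigma_l}$, and $A_G=\bigvee_{a\in G}A_a$ for $\mathcal L^D_{\Sigma_r}$; $[\![p]\!]=V(p)$, Boolean connectives are intersection and complement, $[\![\Box_G\varphi]\!]=A_G^+([\![\varphi]\!])$, $[\![K_GH]\!]=\{x:\forall S\subseteq X\,(x\in A_H^+(S)\Rightarrow x\in A_G^+(S))\}$.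 The tuple $(FA_a)_a$ is interpreted in $\mathcal B$ in the same way. *)

Set Implicit Arguments.
Unset Strict Implicit.

(** A concrete category over Set is presented by its fibres: [fib X] is the
    type of objects A with underlying set X, and [hom A B f] says that the
    function f : X -> Y underlies a morphism A -> B (faithfulness is built in). *)

Section Generic.
Variable fib : Type -> Type.
Variable hom : forall X Y : Type, fib X -> fib Y -> (X -> Y) -> Prop.

Definition fle (X : Type) (A A' : fib X) : Prop := hom A A' (fun x => x).

Definition is_glb (X I : Type) (fam : I -> fib X) (m : fib X) : Prop :=
  (forall i, fle m (fam i)) /\ (forall b, (forall i, fle b (fam i)) -> fle b m).

Definition is_lub (X I : Type) (fam : I -> fib X) (m : fib X) : Prop :=
  (forall i, fle (fam i) m) /\ (forall b, (forall i, fle (fam i) b) -> fle m b).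

Definition initial_lift (X I : Type) (Y : I -> Type) (B : forall i, fib (Y i))
  (f : forall i, X -> Y i) (A : fib X) : Prop :=
  (forall i, hom A (B i) (f i)) /\
  (forall (Z : Type) (C : fib Z) (g : Z -> X),
      hom C A g <-> (forall i, hom C (B i) (fun z => f i (g z)))).
End Generic.

Record ModalCat := {
  fib : Type -> Type;
  hom : forall X Y : Type, fib X -> fib Y -> (X -> Y) -> Prop;
  hom_id : forall (X : Type) (A : fib X), hom A A (fun x => x);
  hom_comp : forall (X Y Z : Type) (A : fib X) (B : fib Y) (C : fib Z)
      (f : X -> Y) (g : Y -> Z),
      hom A B f -> hom B C g -> hom A C (fun x => g (f x));
  topological : forall (X I : Type) (Y : I -> Type) (B : forall i, fib (Y i))
      (f : forall i, X -> Y i),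
      exists A : fib X, initial_lift hom B f A /\
        (forall A' : fib X, initial_lift hom B f A' -> A' = A);
  fle_antisym : forall (X : Type) (A A' : fib X),
      fle hom A A' -> fle hom A' A -> A = A';
  meet : forall (X I : Type), (I -> fib X) -> fib X;
  meet_glb : forall (X I : Type) (fam : I -> fib X), is_glb hom fam (meet fam);
  join : forall (X I : Type), (I -> fib X) -> fib X;
  join_lub : forall (X I : Type) (fam : I -> fib X), is_lub hom fam (join fam);
  (* the concrete functor (-)^+ : A -> CABAO *)
  op : forall X : Type, fib X -> (X -> Prop) -> (X -> Prop);
  op_mor : forall (X Y : Type) (A : fib X) (B : fib Y) (f : X -> Y),
      hom A B f -> forall (T : Y -> Prop) (x : X),
      op B T (f x) -> op A (fun y => T (f y)) x
}.

Arguments hom {m X Y}.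
Arguments meet {m X I}.
Arguments join {m X I}.
Arguments op {m X}.

Record ModalFunctor (M N : ModalCat) := {
  Fobj : forall X : Type, fib M X -> fib N X;
  Fmor : forall (X Y : Type) (A : fib M X) (B : fib M Y) (f : X -> Y),
      hom A B f -> hom (Fobj A) (Fobj B) f;
  Fop : forall (X : Type) (A : fib M X), op (Fobj A) = op A
}.
Arguments Fobj {M N} _ {X} _.

(* (-)^+ injective on objects (objects over different sets are trivially
   sent to different CABAOs, so only the fibre-wise condition matters) *)
Definition op_injective (M : ModalCat) : Prop :=
  forall (X : Type) (A A' : fib M X), op A = op A' -> A = A'.

Definition preserves_meets (M N : ModalCat) (F : ModalFunctor M N) : Prop :=
  forall (X I : Type) (fam : I -> fib M X) (m : fib M X),
    is_glb (@hom M) fam m -> is_glb (@hom N) (fun i => Fobj F (fam i)) (Fobj F m).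

Definition preserves_joins (M N : ModalCat) (F : ModalFunctor M N) : Prop :=
  forall (X I : Type) (fam : I -> fib M X) (m : fib M X),
    is_lub (@hom M) fam m -> is_lub (@hom N) (fun i => Fobj F (fam i)) (Fobj F m).

Inductive form (Sigma P : Type) : Type :=
| FVar : P -> form Sigma P
| FAnd : form Sigma P -> form Sigma P -> form Sigma P
| FNeg : form Sigma P -> form Sigma P
| FBox : (Sigma -> Prop) -> form Sigma P -> form Sigma P
| FK : (Sigma -> Prop) -> (Sigma -> Prop) -> form Sigma P.

Fixpoint sem (M : ModalCat) (Sigma P X : Type) (AG : (Sigma -> Prop) -> fib M X)
    (V : P -> X -> Prop) (phi : form Sigma P) : X -> Prop :=
  match phi with
  | FVar _ p => V p
  | FAnd a b => fun x => sem AG V a x /\ sem AG V b x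
  | FNeg a => fun x => ~ sem AG V a x
  | FBox G a => op (AG G) (sem AG V a)
  | FK _ G H => fun x => forall S : X -> Prop, op (AG H) S x -> op (AG G) S x
  end.

Definition AG_l (M : ModalCat) (Sigma X : Type) (A : Sigma -> fib M X)
    (G : Sigma -> Prop) : fib M X :=
  meet (fun s : {a : Sigma | G a} => A (proj1_sig s)).

Definition AG_r (M : ModalCat) (Sigma X : Type) (A : Sigma -> fib M X)
    (G : Sigma -> Prop) : fib M X :=
  join (fun s : {a : Sigma | G a} => A (proj1_sig s)).

Definition preserves_L_l (P : Type) (M N : ModalCat) (F : ModalFunctor M N) : Prop :=
  forall (Sigma : Type), inhabited Sigma ->
  forall (X : Type) (A : Sigma -> fib M X) (V : P -> X -> Prop) (phi : form Sigma P),
    sem (AG_l A) V phi = sem (AG_l (fun a => Fobj F (A a))) V phi.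

Definition preserves_L_r (P : Type) (M N : ModalCat) (F : ModalFunctor M N) : Prop :=
  forall (Sigma : Type), inhabited Sigma ->
  forall (X : Type) (A : Sigma -> fib M X) (V : P -> X -> Prop) (phi : form Sigma P),
    sem (AG_r A) V phi = sem (AG_r (fun a => Fobj F (A a))) V phi.

(* Both languages read the objects A_G only through their operators A_G^+, so
   the interpretation is preserved as soon as F commutes with the fibre-wise
   meets (joins) that form A_G.  Conversely, the formula Box_G p, evaluated
   under the valuation constantly equal to S, forces (F A)_G^+ (S) = F(A_G)^+ (S);
   injectivity of (-)^+ on B then gives (F A)_G = F(A_G).  An arbitrary meet
   is of this shape: index the family by the nonempty set option I and take
   for G the image of Some. *)

From Stdlib Require Import Setoid FunctionalExtensionality.

Set Implicit Arguments.
Unset Strict Implicit.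

Section Fibres.
Variable K : ModalCat.

Lemma is_glb_unique (X I : Type) (fam : I -> fib K X) (m m' : fib K X) :
  is_glb (@hom K) fam m -> is_glb (@hom K) fam m' -> m = m'.
Proof.
  intros [Hm Hm_max] [Hm' Hm'_max].
  apply fle_antisym; [apply Hm'_max | apply Hm_max]; assumption.
Qed.

Lemma is_lub_unique (X I : Type) (fam : I -> fib K X) (m m' : fib K X) :
  is_lub (@hom K) fam m -> is_lub (@hom K) fam m' -> m = m'.
Proof.
  intros [Hm Hm_min] [Hm' Hm'_min].
  apply fle_antisym; [apply Hm_min | apply Hm'_min]; assumption.
Qed.

Lemma is_glb_meet (X I : Type) (fam : I -> fib K X) (m : fib K X) :
  is_glb (@hom K) fam m -> meet fam = m.
Proof. apply is_glb_unique, meet_glb. Qed.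

Lemma is_lub_join (X I : Type) (fam : I -> fib K X) (m : fib K X) :
  is_lub (@hom K) fam m -> join fam = m.
Proof. apply is_lub_unique, join_lub. Qed.

Lemma is_glb_reindex (X I J : Type) (e : I -> J) (h : J -> fib K X) (m : fib K X) :
  (forall j, exists i, e i = j) ->
  is_glb (@hom K) (fun i => h (e i)) m <-> is_glb (@hom K) h m.
Proof.
  intros e_surj; split; intros [Hlow Hmax]; split.
  - intro j; destruct (e_surj j) as [i <-]; apply Hlow.
  - intros b Hb; apply Hmax; intro i; apply Hb.
  - intro i; apply Hlow.
  - intros b Hb; apply Hmax; intro j; destruct (e_surj j) as [i <-]; apply Hb.
Qed.

Lemma is_lub_reindex (X I J : Type) (e : I -> J) (h : J -> fib K X) (m : fib K X) :
  (forall j, exists i, e i = j) ->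
  is_lub (@hom K) (fun i => h (e i)) m <-> is_lub (@hom K) h m.
Proof.
  intros e_surj; split; intros [Hup Hmin]; split.
  - intro j; destruct (e_surj j) as [i <-]; apply Hup.
  - intros b Hb; apply Hmin; intro i; apply Hb.
  - intro i; apply Hup.
  - intros b Hb; apply Hmin; intro j; destruct (e_surj j) as [i <-]; apply Hb.
Qed.

Lemma meet_reindex (X I J : Type) (e : I -> J) (h : J -> fib K X) :
  (forall j, exists i, e i = j) -> meet (fun i => h (e i)) = meet h.
Proof.
  intros e_surj; apply is_glb_meet, (is_glb_reindex h _ e_surj), meet_glb.
Qed.

Lemma join_reindex (X I J : Type) (e : I -> J) (h : J -> fib K X) :
  (forall j, exists i, e i = j) -> join (fun i => h (e i)) = join h.
Proof.
  intros e_surj; apply is_lub_join, (is_lub_reindex h _ e_surj), join_lub.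
Qed.

End Fibres.

Lemma sem_op_ext (M N : ModalCat) (Sigma P X : Type)
    (AG : (Sigma -> Prop) -> fib M X) (BG : (Sigma -> Prop) -> fib N X)
    (V : P -> X -> Prop) :
  (forall G, op (AG G) = op (BG G)) ->
  forall phi, sem AG V phi = sem BG V phi.
Proof.
  intros HG phi; induction phi as [p | a IHa b IHb | a IHa | G a IHa | G H];
    simpl; try rewrite IHa; try rewrite IHb; rewrite ?HG; reflexivity.
Qed.

Definition AG (K : ModalCat) (agg : forall X I : Type, (I -> fib K X) -> fib K X)
    (Sigma X : Type) (A : Sigma -> fib K X) (G : Sigma -> Prop) : fib K X :=
  agg X _ (fun s : {a : Sigma | G a} => A (proj1_sig s)).

Lemma AG_image_Some (K : ModalCat) (agg : forall X I : Type, (I -> fib K X) -> fib K X)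
    (X I : Type) (g : option I -> fib K X) :
  (forall (J : Type) (e : I -> J) (h : J -> fib K X),
     (forall j, exists i, e i = j) -> agg X I (fun i => h (e i)) = agg X J h) ->
  AG agg g (fun a => exists i, a = Some i) = agg X I (fun i => g (Some i)).
Proof.
  intros Hreindex; unfold AG; symmetry.
  apply (Hreindex _ (fun i => exist (fun a => exists j, a = Some j) (Some i)
                                    (ex_intro _ i eq_refl))
                  (fun s => g (proj1_sig s))).
  intros [a [i ->]]; exists i; reflexivity.
Qed.

(* [AG_l] and [AG_r] are [AG (@meet _)] and [AG (@join _)] up to conversion. *)
Section Aggregation.
Variables M N : ModalCat.
Variable F : ModalFunctor M N.
Variable aggM : forall X I : Type, (I -> fib M X) -> fib M X.
Variable aggN : forall X I : Type, (I -> fib N X) -> fib N X.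

Definition preserves_agg : Prop :=
  forall (X I : Type) (fam : I -> fib M X),
    Fobj F (aggM fam) = aggN (fun i => Fobj F (fam i)).

Lemma sem_AG_preserved (P : Type) :
  preserves_agg ->
  forall (Sigma X : Type) (A : Sigma -> fib M X) (V : P -> X -> Prop) phi,
    sem (AG (@aggM) A) V phi = sem (AG (@aggN) (fun a => Fobj F (A a))) V phi.
Proof.
  intros HF Sigma X A V; apply sem_op_ext; intro G.
  unfold AG; rewrite <- HF, Fop; reflexivity.
Qed.

Lemma op_AG_of_sem_preserved (P : Type) (p : P) (Sigma X : Type)
    (A : Sigma -> fib M X) (G : Sigma -> Prop) :
  (forall V : P -> X -> Prop, forall phi,
     sem (AG (@aggM) A) V phi = sem (AG (@aggN) (fun a => Fobj F (A a))) V phi) ->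
  op (AG (@aggM) A G) = op (AG (@aggN) (fun a => Fobj F (A a)) G).
Proof.
  intros Hsem; apply functional_extensionality; intro S.
  exact (Hsem (fun _ => S) (FBox G (FVar _ p))).
Qed.

Hypothesis aggM_reindex : forall (X I J : Type) (e : I -> J) (h : J -> fib M X),
  (forall j, exists i, e i = j) -> aggM (fun i => h (e i)) = aggM h.
Hypothesis aggN_reindex : forall (X I J : Type) (e : I -> J) (h : J -> fib N X),
  (forall j, exists i, e i = j) -> aggN (fun i => h (e i)) = aggN h.

Lemma preserves_agg_of_sem_preserved (P : Type) (p : P) :
  op_injective N ->
  (forall Sigma : Type, inhabited Sigma ->
   forall (X : Type) (A : Sigma -> fib M X) (V : P -> X -> Prop) phi,
     sem (AG (@aggM) A) V phi = sem (AG (@aggN) (fun a => Fobj F (A a))) V phi) ->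
  preserves_agg.
Proof.
  intros Hinj Hsem X I fam.
  (* the padding value at [None] is irrelevant, it only makes the index set nonempty *)
  set (g := fun o : option I => match o with Some i => fam i | None => aggM fam end).
  assert (Hop := op_AG_of_sem_preserved p (fun a => exists i, a = Some i)
                                        (Hsem _ (inhabits None) X g)).
  rewrite (AG_image_Some g (aggM_reindex (I := I))) in Hop.
  rewrite (AG_image_Some (fun a => Fobj F (g a)) (aggN_reindex (I := I))) in Hop.
  apply Hinj; rewrite Fop; exact Hop.
Qed.

End Aggregation.

Lemma preserves_meets_iff (M N : ModalCat) (F : ModalFunctor M N) :
  preserves_meets F <-> preserves_agg F (@meet M) (@meet N).
Proof.
  split.
  - intros HF X I fam; symmetry; apply is_glb_meet, HF, meet_glb.
  - intros HF X I fam m Hm.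
    rewrite <- (is_glb_meet Hm), HF; apply meet_glb.
Qed.

Lemma preserves_joins_iff (M N : ModalCat) (F : ModalFunctor M N) :
  preserves_joins F <-> preserves_agg F (@join M) (@join N).
Proof.
  split.
  - intros HF X I fam; symmetry; apply is_lub_join, HF, join_lub.
  - intros HF X I fam m Hm.
    rewrite <- (is_lub_join Hm), HF; apply join_lub.
Qed.

Theorem theorem4 (P : Type) (HP : inhabited P) (M N : ModalCat)
  (F : ModalFunctor M N) (Hinj : op_injective N) :
  (preserves_meets F <-> preserves_L_l P F) /\
  (preserves_joins F <-> preserves_L_r P F).
Proof.
  destruct HP as [p].
  rewrite preserves_meets_iff, preserves_joins_iff.
  split; split.
  - intros HF Sigma _; exact (sem_AG_preserved HF (Sigma := Sigma)).
  - apply (preserves_agg_of_sem_preserved (meet_reindex (K := M))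
             (meet_reindex (K := N)) p Hinj).
  - intros HF Sigma _; exact (sem_AG_preserved HF (Sigma := Sigma)).
  - apply (preserves_agg_of_sem_preserved (join_reindex (K := M))
             (join_reindex (K := N)) p Hinj).
Qed.
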